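(* Let $R$ be a commutative Noetherian ring of prime characteristic $p$, suppose $c$ is a $p^{w_0}$-weak test element for $R$, and let $\mathfrak{a}$ be an ideal of $R$. Let $H(\mathfrak{a})=\bigoplus_{n\ge0}R/\mathfrak{a}^{[p^n]}$ and $G(\mathfrak{a})=\bigoplus_{n\ge0}R/(\mathfrak{a}^{[p^n]})^F$ be the graded left $R[x,f]$-modules in which $x$ sends the class of $r$ in degree $n$ to the class of $r^p$ in degree $n+1$. Then (i) $\operatorname{ann}_{H(\mathfrak{a})}(\bigoplus_{n\ge w_0}Rcx^n)=\bigoplus_{n\ge0}(\mathfrak{a}^{[p^n]})^*/\mathfrak{a}^{[p^n]}$; (ii) $\operatorname{ann}_{G(\mathfrak{a})}(\bigoplus_{n\ge0}Rcx^n)=\bigoplus_{n\ge0}(\mathfrak{a}^{[p^n]})^*/(\mathfrak{a}^{[p^n]})^F$.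
   Context: $R[x,f]$ is the Frobenius skew polynomial ring: free left $R$-module on $(x^i)_{i\ge0}$, $xr=r^px$. For a subset $\mathfrak{B}$ of $R[x,f]$, $\operatorname{ann}_M\mathfrak{B}=\{m\in M:\theta m=0\ \forall\theta\in\mathfrak{B}\}$. $\mathfrak{a}^{[p^n]}$ is generated by $p^n$-th powers of elements of $\mathfrak{a}$; $\mathfrak{a}^F=\{r: r^{p^n}\in\mathfrak{a}^{[p^n]}\text{ for some }n\}$ (Frobenius closure); $R^\circ$ the complement of the union of minimal primes; $\mathfrak{a}^*$ tight closure. A $p^{w_0}$-weak test element is $c\in R^\circ$ such that for every ideal $\mathfrak{b}$ and $r\in R$: $r\in\mathfrak{b}^*$ iff $cr^{p^n}\in\mathfrak{b}^{[p^n]}$ for all $n\ge w_0$. *)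

From HB Require Import structures.
From mathcomp Require Import all_boot all_order all_algebra.
Set Implicit Arguments. Unset Strict Implicit. Unset Printing Implicit Defensive.
Import GRing.Theory.
Local Open Scope ring_scope.

Section CharPDefs.
Variable R : comNzRingType.

Definition is_ideal (I : R -> Prop) : Prop :=
  [/\ I 0, (forall x y, I x -> I y -> I (x + y)) & (forall r x, I x -> I (r * x))].

Definition noetherian : Prop :=
  forall I : nat -> R -> Prop,
    (forall n, is_ideal (I n)) -> (forall n x, I n x -> I n.+1 x) ->
    exists N, forall n, (N <= n)%N -> forall x, I n x -> I N x.

Definition ideal_gen (S : R -> Prop) : R -> Prop :=
  fun x => exists s : seq (R * R),
    (forall u, u \in s -> S u.2) /\ x = \sum_(u <- s) u.1 * u.2.

Definition frob_pow (a : R -> Prop) (q : nat) : R -> Prop :=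
  ideal_gen (fun y => exists r, a r /\ y = r ^+ q).

Definition frob_closure (p : nat) (a : R -> Prop) : R -> Prop :=
  fun r => exists n, frob_pow a (p ^ n) (r ^+ (p ^ n)).

Definition is_prime_ideal (P : R -> Prop) : Prop :=
  [/\ is_ideal P, ~ P 1 & forall x y, P (x * y) -> P x \/ P y].

Definition is_minimal_prime (P : R -> Prop) : Prop :=
  is_prime_ideal P /\
  forall Q, is_prime_ideal Q -> (forall x, Q x -> P x) -> forall x, P x -> Q x.

Definition Rcirc (c : R) : Prop := forall P, is_minimal_prime P -> ~ P c.

Definition tight_closure (p : nat) (a : R -> Prop) : R -> Prop :=
  fun r => exists c, Rcirc c /\ exists n0, forall n, (n0 <= n)%N ->
    frob_pow a (p ^ n) (c * r ^+ (p ^ n)).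

Definition weak_test_element (p w0 : nat) (c : R) : Prop :=
  Rcirc c /\ forall (b : R -> Prop) (r : R), is_ideal b ->
    (tight_closure p b r <->
       forall n, (w0 <= n)%N -> frob_pow b (p ^ n) (c * r ^+ (p ^ n))).

(* Elements of the Frobenius skew polynomial ring R[x,f] are represented by
   their coefficient lists: theta = \sum_i theta`_i x^i.
   Elements of the graded modules H(a), G(a) are represented by sequences of
   representatives: m = \sum_k [m`_k] in degree k.
   Action (x r = r^p x, x [s]_j = [s^p]_{j+1}):
   (theta . m)_k = \sum_{i <= k} theta_i * m_{k-i}^{p^i}. *)
Definition skew_act (p : nat) (theta m : seq R) : seq R :=
  mkseq (fun k => \sum_(i < k.+1) theta`_i * (m`_(k - i)) ^+ (p ^ i))
        (size theta + size m).

(* zero in H(a) = (+)_k R/a^[p^k] *)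
Definition H_zero (p : nat) (a : R -> Prop) (m : seq R) : Prop :=
  forall k, frob_pow a (p ^ k) m`_k.

(* zero in G(a) = (+)_k R/(a^[p^k])^F *)
Definition G_zero (p : nat) (a : R -> Prop) (m : seq R) : Prop :=
  forall k, frob_closure p (frob_pow a (p ^ k)) m`_k.

Definition cx_span (w0 : nat) (c : R) (theta : seq R) : Prop :=
  forall n, ((n < w0)%N -> theta`_n = 0) /\
            ((w0 <= n)%N -> exists r, theta`_n = r * c).

End CharPDefs.

From HB Require Import structures.
From mathcomp Require Import all_boot all_order all_algebra.
From mathcomp Require Import zify.
Import GRing.Theory.
Set Implicit Arguments. Unset Strict Implicit.
Local Open Scope ring_scope.

(* Acting by c x^j on m puts c m_n^(p^j) in degree n + j, so the annihilator
   conditions are exactly the test-element conditions c m_n^(p^j) in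
   a^[p^(n+j)] = (a^[p^n])^[p^j] for all j >= w0 (resp. all j, up to Frobenius
   closure).  For (ii), an element of the Frobenius closure is tightly closed,
   so one more application of the test element c gives
   c^(1 + p^w0) m_n^(p^j) in (a^[p^n])^[p^j] for j >= w0, with c^(1 + p^w0) in
   R^o; conversely c m^(p^i) lies in the Frobenius closure because its
   p^w0-th power is a multiple of c m^(p^(i + w0)). *)

Section Ideals.
Variable R : comNzRingType.
Implicit Types (I S : R -> Prop) (x : R).

Lemma ideal0 I : is_ideal I -> I 0.
Proof. by case. Qed.

Lemma idealMl I r x : is_ideal I -> I x -> I (r * x).
Proof. by case=> _ _; apply. Qed.

Lemma ideal_sum I (T : Type) (s : seq T) (P : pred T) (F : T -> R) :
  is_ideal I -> (forall i, P i -> I (F i)) -> I (\sum_(i <- s | P i) F i).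
Proof. by case=> I0 ID _; apply: big_ind. Qed.

Lemma ideal_gen_is_ideal S : is_ideal (ideal_gen S).
Proof.
split.
- by exists [::]; rewrite big_nil.
- move=> _ _ [s [Ss ->]] [t [St ->]]; exists (s ++ t); rewrite big_cat.
  by split=> // u; rewrite mem_cat => /orP[/Ss | /St].
- move=> r _ [s [Ss ->]]; exists [seq (r * u.1, u.2) | u <- s]; split.
  + by move=> _ /mapP[u /Ss Su ->].
  + by rewrite big_map big_distrr; apply: eq_bigr => u _ /=; rewrite mulrA.
Qed.

Lemma mem_ideal_gen S x : S x -> ideal_gen S x.
Proof.
move=> Sx; exists [:: (1, x)]; rewrite big_seq1 mul1r.
by split=> // u; rewrite mem_seq1 => /eqP ->.
Qed.

Lemma ideal_gen_min S I : is_ideal I -> (forall x, S x -> I x) ->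
  forall x, ideal_gen S x -> I x.
Proof.
move=> idI SI _ [s [Ss ->]]; rewrite big_seq; apply: ideal_sum => // u /Ss Su.
by apply: idealMl => //; apply: SI.
Qed.

Lemma frob_pow_is_ideal (a : R -> Prop) q : is_ideal (frob_pow a q).
Proof. exact: ideal_gen_is_ideal. Qed.

Lemma frob_powM_sub (a : R -> Prop) q q' x :
  frob_pow a (q * q') x -> frob_pow (frob_pow a q) q' x.
Proof.
apply: ideal_gen_min; first exact: ideal_gen_is_ideal.
move=> _ [r [ar ->]]; apply: mem_ideal_gen; exists (r ^+ q).
by rewrite exprM; split=> //; apply: mem_ideal_gen; exists r.
Qed.

Lemma Rcirc1 : Rcirc (1 : R).
Proof. by move=> P [[_ notP1 _] _]. Qed.

Lemma RcircM x y : Rcirc x -> Rcirc y -> Rcirc (x * y).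
Proof.
move=> Rx Ry P minP; have [[_ _ primeP] _] := minP.
by move=> /primeP[]; [apply: Rx | apply: Ry].
Qed.

Lemma RcircX x k : Rcirc x -> Rcirc (x ^+ k).
Proof.
move=> Rx; elim: k => [|k IHk]; first by rewrite expr0; apply: Rcirc1.
by rewrite exprS; apply: RcircM.
Qed.

End Ideals.

Section Frobenius.
Variables (R : comNzRingType) (p : nat).
Hypothesis pcharRp : p \in [pchar R].
Implicit Types (a S : R -> Prop) (x : R).

Let pnat_pchar_expn e : [pchar R].-nat (p ^ e)%N.
Proof. by rewrite pnatX (pnatE _ (pcharf_prime pcharRp)) pcharRp. Qed.

Lemma expr0_pchar_expn e : (0 : R) ^+ (p ^ e) = 0.
Proof.
by rewrite expr0n expn_eq0 eqn0Ngt prime_gt0 // (pcharf_prime pcharRp).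
Qed.

Lemma ideal_gen_exp_pchar S e x : ideal_gen S x ->
  ideal_gen (fun y => exists s, S s /\ y = s ^+ (p ^ e)) (x ^+ (p ^ e)).
Proof.
move=> [s [Ss ->]]; exists [seq (u.1 ^+ (p ^ e), u.2 ^+ (p ^ e)) | u <- s].
split; first by move=> _ /mapP[u /Ss Su ->]; exists u.2.
rewrite big_map; elim: s {Ss} => [|u s IHs]; first by rewrite !big_nil expr0_pchar_expn.
by rewrite !big_cons exprDn_pchar // IHs exprMn.
Qed.

Lemma frob_pow_exp_pchar a q e x :
  frob_pow a q x -> frob_pow a (q * p ^ e) (x ^+ (p ^ e)).
Proof.
move=> /(ideal_gen_exp_pchar e); apply: ideal_gen_min; first exact: ideal_gen_is_ideal.
move=> _ [_ [[r [ar ->]] ->]]; apply: mem_ideal_gen.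
by exists r; rewrite -exprM.
Qed.

Lemma frob_pow_expn_sub a q e x :
  frob_pow (frob_pow a q) (p ^ e) x -> frob_pow a (q * p ^ e) x.
Proof.
apply: ideal_gen_min; first exact: ideal_gen_is_ideal.
by move=> _ [r [ar ->]]; apply: frob_pow_exp_pchar.
Qed.

Lemma frob_closure_is_ideal a : is_ideal (frob_closure p a).
Proof.
have idF n : is_ideal (frob_pow a (p ^ n)) by apply: frob_pow_is_ideal.
split.
- by exists 0%N; rewrite expr0_pchar_expn; apply: ideal0.
- move=> x y [n ax] [n' ay]; exists (n + n')%N; rewrite exprDn_pchar //.
  case: (idF (n + n')%N) => _ ID _; apply: ID.
  + by rewrite expnD exprM; apply: frob_pow_exp_pchar.
  + by rewrite addnC expnD exprM; apply: frob_pow_exp_pchar.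
- by move=> r x [n ax]; exists n; rewrite exprMn; apply: idealMl.
Qed.

Lemma frob_closure_sub_tight a x : frob_closure p a x -> tight_closure p a x.
Proof.
move=> [e ax]; exists 1; split; first exact: Rcirc1.
exists e => n le_en; rewrite mul1r -(subnKC le_en) expnD exprM.
exact: frob_pow_exp_pchar.
Qed.

End Frobenius.

(* [monomial j c] is the element c x^j of R[x,f]. *)
Definition monomial (R : comNzRingType) (j : nat) (c : R) : seq R :=
  rcons (nseq j 0) c.

Section SkewAction.
Variables (R : comNzRingType) (p : nat).
Implicit Types (c : R) (theta m : seq R).

Lemma nth_monomial j c i : (monomial j c)`_i = if i == j then c else 0.
Proof.
by rewrite nth_rcons size_nseq nth_nseq; case: ltngtP; rewrite ?if_same.
Qed.

Lemma cx_span_monomial w0 c j : (w0 <= j)%N -> cx_span w0 c (monomial j c).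
Proof.
move=> le_w0j i; rewrite nth_monomial; split=> [lt_iw0 | _].
- by case: eqP => // eq_ij; move: lt_iw0; rewrite eq_ij ltnNge le_w0j.
- by case: eqP => _; [exists 1; rewrite mul1r | exists 0; rewrite mul0r].
Qed.

Lemma skew_act_monomial j c m n : (0 < p)%N ->
  (skew_act p (monomial j c) m)`_(n + j) = c * m`_n ^+ (p ^ j).
Proof.
move=> p_gt0; rewrite /skew_act.
have [lt_nj_size | ] := ltnP (n + j) (size (monomial j c) + size m).
  have le_j_nj : (j < (n + j).+1)%N by rewrite ltnS leq_addl.
  rewrite nth_mkseq // (bigD1 (Ordinal le_j_nj)) //= nth_monomial eqxx addnK.
  rewrite big1 ?addr0 // => i /eqP neq_ij; rewrite nth_monomial.
  by case: eqP => [eq_ij | _]; [case: neq_ij; apply: val_inj | rewrite mul0r].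
rewrite size_rcons size_nseq => le_size_nj.
have le_size_n : (size m <= n)%N by lia.
rewrite !nth_default ?size_mkseq ?size_rcons ?size_nseq //.
by rewrite expr0n expn_eq0 eqn0Ngt p_gt0 mulr0.
Qed.

Lemma skew_act_coef_ideal (I : R -> Prop) theta m k : is_ideal I ->
  (forall i, (i <= k)%N -> I (theta`_i * m`_(k - i) ^+ (p ^ i))) ->
  I (skew_act p theta m)`_k.
Proof.
move=> idI Iterm; rewrite /skew_act.
have [lt_k_size | le_size_k] := ltnP k (size theta + size m).
  by rewrite nth_mkseq //; apply: ideal_sum => // i _; apply: Iterm; rewrite -ltnS.
by rewrite nth_default ?size_mkseq //; apply: ideal0.
Qed.

End SkewAction.

Section WeakTestElement.
Variables (R : comNzRingType) (p w0 : nat) (c : R).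
Hypotheses (pcharRp : p \in [pchar R]) (c_test : weak_test_element p w0 c).
Implicit Types (a : R -> Prop) (r : R).

Lemma test_frob_pow a n i r : (w0 <= i)%N ->
  tight_closure p (frob_pow a (p ^ n)) r -> frob_pow a (p ^ (n + i)) (c * r ^+ (p ^ i)).
Proof.
move=> le_w0i /(c_test.2 _ _ (frob_pow_is_ideal _ _)) /(_ i le_w0i).
by rewrite expnD; apply: frob_pow_expn_sub.
Qed.

Lemma tight_of_test_frob_pow a n r :
  (forall i, (w0 <= i)%N -> frob_pow a (p ^ (n + i)) (c * r ^+ (p ^ i))) ->
  tight_closure p (frob_pow a (p ^ n)) r.
Proof.
move=> test; apply/(c_test.2 _ _ (frob_pow_is_ideal _ _)) => i le_w0i.
by apply: frob_powM_sub; rewrite -expnD; apply: test.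
Qed.

Lemma test_frob_closure a n i r : tight_closure p (frob_pow a (p ^ n)) r ->
  frob_closure p (frob_pow a (p ^ (n + i))) (c * r ^+ (p ^ i)).
Proof.
move=> /(test_frob_pow (leq_addl i w0)); rewrite addnA => test.
have pw0_gt0 : (0 < p ^ w0)%N by rewrite expn_gt0 prime_gt0 // (pcharf_prime pcharRp).
exists w0; apply: frob_powM_sub; rewrite -expnD exprMn -exprM -expnD.
by rewrite -(prednK pw0_gt0) exprSr -mulrA; apply: idealMl (frob_pow_is_ideal _ _) test.
Qed.

Lemma tight_of_test_frob_closure a n r :
  (forall j, frob_closure p (frob_pow a (p ^ (n + j))) (c * r ^+ (p ^ j))) ->
  tight_closure p (frob_pow a (p ^ n)) r.
Proof.
move=> test; exists (c * c ^+ (p ^ w0)).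
split; first by apply: RcircM; [|apply: RcircX]; apply: c_test.1.
exists w0 => j le_w0j; apply: frob_powM_sub.
have := test_frob_pow (leqnn w0) (frob_closure_sub_tight pcharRp (test (j - w0)%N)).
by rewrite -addnA subnK // -expnD exprMn -exprM -expnD subnK // mulrA.
Qed.

Lemma ann_H_cx_span a m :
  (forall theta, cx_span w0 c theta -> H_zero p a (skew_act p theta m)) <->
  (forall n, tight_closure p (frob_pow a (p ^ n)) m`_n).
Proof.
have p_gt0 : (0 < p)%N by rewrite prime_gt0 // (pcharf_prime pcharRp).
split=> [ann n | tight theta span k].
  apply: tight_of_test_frob_pow => i le_w0i.
  by rewrite -skew_act_monomial //; apply/ann/cx_span_monomial.
apply: skew_act_coef_ideal => [|i le_ik]; first exact: frob_pow_is_ideal.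
have [lt_iw0 | le_w0i] := ltnP i w0.
  by rewrite (span i).1 // mul0r; apply: ideal0 (frob_pow_is_ideal _ _).
have [s ->] := (span i).2 le_w0i; rewrite -mulrA; apply: idealMl (frob_pow_is_ideal _ _) _.
by have := test_frob_pow le_w0i (tight (k - i)%N); rewrite subnK.
Qed.

Lemma ann_G_cx_span a m :
  (forall theta, cx_span 0 c theta -> G_zero p a (skew_act p theta m)) <->
  (forall n, tight_closure p (frob_pow a (p ^ n)) m`_n).
Proof.
have p_gt0 : (0 < p)%N by rewrite prime_gt0 // (pcharf_prime pcharRp).
split=> [ann n | tight theta span k].
  apply: tight_of_test_frob_closure => j.
  by rewrite -skew_act_monomial //; apply/ann/cx_span_monomial.
have idF := frob_closure_is_ideal pcharRp (frob_pow a (p ^ k)).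
apply: (skew_act_coef_ideal idF) => i le_ik.
have [s ->] := (span i).2 (leq0n i); rewrite -mulrA; apply: idealMl idF _.
by have := test_frob_closure i (tight (k - i)%N); rewrite subnK.
Qed.

End WeakTestElement.

Theorem proposition2p4 (R : comNzRingType) (p w0 : nat) (c : R) (a : R -> Prop) :
  noetherian R -> p \in [pchar R] ->
  weak_test_element p w0 c -> is_ideal a ->
  (* (i) ann_{H(a)} ((+)_{n>=w0} R c x^n) = (+)_n (a^[p^n])^* / a^[p^n] *)
  (forall m : seq R,
     (forall theta, cx_span w0 c theta -> H_zero p a (skew_act p theta m)) <->
     (forall n, tight_closure p (frob_pow a (p ^ n)) m`_n)) /\
  (* (ii) ann_{G(a)} ((+)_{n>=0} R c x^n) = (+)_n (a^[p^n])^* / (a^[p^n])^F *)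
  (forall m : seq R,
     (forall theta, cx_span 0 c theta -> G_zero p a (skew_act p theta m)) <->
     (forall n, tight_closure p (frob_pow a (p ^ n)) m`_n)).
Proof.
move=> _ pcharRp c_test _.
by split=> m; [apply: (ann_H_cx_span pcharRp c_test) | apply: (ann_G_cx_span pcharRp c_test)].
Qed.
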